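(* In the weighted push-sum setting below, if $\{\mathbb G(t)\}$ is uniformly strongly connected, then the sequence of stochastic matrices $\{S(t)\}$ has a unique absolute probability sequence $\{\pi(t)\}$, given by $\pi_i(t)=y_i(t)$ for all $i\in\mathcal V$ and $t\ge0$.
   Context: Setting. Fix $n$ agents, $\mathcal V=\{1,\dots,n\}$. For each $t\in\{0,1,2,\dots\}$, $\mathbb G(t)=(\mathcal V,\mathcal E(t))$ is a directed graph containing a self-arc $(i,i)$ at every vertex; $\mathcal N_i(t)=\{j:(j,i)\in\mathcal E(t)\}$ and $\mathcal N_i^-(t)=\{k:(i,k)\in\mathcal E(t)\}$. Weights $w_{ij}(t)$ are positive for $j\in\mathcal N_i(t)$ and $w_{ij}(t)=0$ otherwise, and satisfy: there is $\beta>0$ with $w_{ij}(t)\ge\beta$ whenever $j\in\mathcal N_i(t)$, and $\sum_{j\in\mathcal N_i^-(t)}w_{ji}(t)=1$ for all $i,t$. The sequence $\{\mathbb G(t)\}$ is uniformly strongly connected if there is a positive integer $L$ such that for every $t\ge0$ the graph with vertex set $\mathcal V$ and edge set $\bigcup_{k=t}^{t+L-1}\mathcal E(k)$ is strongly connected. Weighted push-sum: each agent knows $c_i>0$ with $\sum_ic_i=1$; $y_i(t+1)=\sum_{j\in\mathcal N_i(t)}w_{ij}(t)y_j(t)$ with $y_i(0)=c_i$. Define the row-stochastic matrix $S(t)$ with entries $s_{ij}(t)=w_{ij}(t)y_j(t)/y_i(t+1)$. Definition: for a sequence $\{S(t)\}_{t\ge0}$ of (row) stochastic matrices, a sequence of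 stochastic vectors $\{\pi(t)\}_{t\ge0}$ (nonnegative entries summing to one) is an absolute probability sequence if $\pi^\top(t)=\pi^\top(t+1)S(t)$ for all $t\ge0$. *)

From HB Require Import structures.
From mathcomp Require Import all_boot all_order all_algebra.
From mathcomp Require Import reals.
Set Implicit Arguments. Unset Strict Implicit. Unset Printing Implicit Defensive.
Import Order.TTheory GRing.Theory Num.Theory.
Local Open Scope ring_scope.

(* Agents are 'I_n.  A time-varying graph is E : nat -> rel 'I_n,
   with  E t j i  meaning that (j,i) is an arc of G(t) (j -> i).
   Weights are w t i j = w_{ij}(t). *)

Definition in_nbrs n (E : nat -> rel 'I_n) t (i : 'I_n) : pred 'I_n :=
  fun j => E t j i.
Definition out_nbrs n (E : nat -> rel 'I_n) t (i : 'I_n) : pred 'I_n :=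
  fun k => E t i k.

Definition weight_assumptions (R : realType) n (E : nat -> rel 'I_n)
    (w : nat -> 'I_n -> 'I_n -> R) (beta : R) : Prop :=
  0 < beta /\
  (forall t i j, j \in in_nbrs E t i -> 0 < w t i j) /\
  (forall t i j, j \notin in_nbrs E t i -> w t i j = 0) /\
  (forall t i j, j \in in_nbrs E t i -> beta <= w t i j) /\
  (forall t i, \sum_(j | j \in out_nbrs E t i) w t j i = 1).

Definition has_self_arcs n (E : nat -> rel 'I_n) : Prop :=
  forall t (i : 'I_n), E t i i.

Definition union_rel n (E : nat -> rel 'I_n) (t L : nat) : rel 'I_n :=
  fun a b => [exists k : 'I_L, E (t + k)%N a b].

Definition strongly_connected n (e : rel 'I_n) : Prop :=
  forall i j : 'I_n, connect e i j.

Definition uniformly_strongly_connected n (E : nat -> rel 'I_n) : Prop :=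
  exists L : nat, (0 < L)%N /\ forall t, strongly_connected (union_rel E t L).

Fixpoint pushsum (R : realType) n (E : nat -> rel 'I_n)
    (w : nat -> 'I_n -> 'I_n -> R) (c : 'I_n -> R) (t : nat) : 'I_n -> R :=
  match t with
  | 0 => c
  | t'.+1 => fun i => \sum_(j | j \in in_nbrs E t' i) w t' i j * pushsum E w c t' j
  end.

Definition Smat (R : realType) n (E : nat -> rel 'I_n)
    (w : nat -> 'I_n -> 'I_n -> R) (c : 'I_n -> R) (t : nat) (i j : 'I_n) : R :=
  w t i j * pushsum E w c t j / pushsum E w c t.+1 i.

Definition stochastic_vector (R : realType) n (p : 'I_n -> R) : Prop :=
  (forall i, 0 <= p i) /\ \sum_i p i = 1.

Definition abs_prob_seq (R : realType) n (S : nat -> 'I_n -> 'I_n -> R)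
    (pi : nat -> 'I_n -> R) : Prop :=
  (forall t, stochastic_vector (pi t)) /\
  (forall t (j : 'I_n), pi t j = \sum_i pi t.+1 i * S t i j).

From HB Require Import structures.
From mathcomp Require Import all_boot all_order all_algebra.
From mathcomp Require Import reals.
From mathcomp Require Import lra ring zify.
Set Implicit Arguments. Unset Strict Implicit. Unset Printing Implicit Defensive.
Import Order.TTheory GRing.Theory Num.Theory.
Local Open Scope ring_scope.

(* Write W(t) = (w_ij(t)); its columns sum to one.
   Existence is a direct computation: sum_i y_i(t+1) s_ij(t) = y_j(t).
   Uniqueness rests on a consensus estimate for backward averaging
   z(s) = W(s)^T z(s+1) under uniform strong connectivity with window L:
   over K = n L steps the set of entries lying a margin below the maximum
   grows by one vertex per window, so the spread of z shrinks by the factor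
   1 - delta with delta = beta^K ([backward_contract]).  Dually, pairing a
   backward averaged z with the forward push-sum recursion is invariant,
   which gives the lower bound y_i(t) >= delta for t >= K.  For any absolute
   probability sequence pi, the ratios z_i(t) = pi_i(t) / y_i(t) are
   backward averaged and bounded by 1/delta, hence have zero spread; as
   sum_i z_i(t) y_i(t) = 1 = sum_i y_i(t), all ratios equal one. *)

Lemma bernoulli_ineq (R : realFieldType) (d : R) (k : nat) :
  0 <= d <= 1 -> (1 - d) ^+ k * (1 + k%:R * d) <= 1.
Proof.
case/andP=> d_ge0 d_le1; elim: k => [|k IH]; first by rewrite expr0 mul0r addr0 mulr1.
have pow_ge0 : 0 <= (1 - d) ^+ k by apply: exprn_ge0; lra.
have k_ge0 : 0 <= k%:R :> R by exact: ler0n.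
have step : (1 - d) * (1 + (k%:R + 1) * d) <= 1 + k%:R * d by nra.
by rewrite exprS -natr1; nra.
Qed.

Lemma geometric_vanish (R : archiRealFieldType) (d x B : R) :
  0 < d -> d <= 1 -> (forall k, x <= (1 - d) ^+ k * B) -> x <= 0.
Proof.
move=> d_gt0 d_le1 x_le; rewrite leNgt; apply/negP => x_gt0.
have xB : x <= B by have := x_le 0%N; rewrite expr0 mul1r.
have dx_gt0 : 0 < d * x by exact: mulr_gt0.
set N := Num.Def.archi_bound (B / (d * x)).
have N_big : B / (d * x) < N%:R by apply: archi_boundP; apply: divr_ge0; lra.
have NdxB : B < N%:R * (d * x) by rewrite -ltr_pdivrMr.
have bern : (1 - d) ^+ N * (1 + N%:R * d) <= 1 by apply: bernoulli_ineq; lra.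
have N_ge0 : 0 <= N%:R :> R by exact: ler0n.
have : x * (1 + N%:R * d) <= (1 - d) ^+ N * B * (1 + N%:R * d).
  by apply: ler_wpM2r; [nra | exact: x_le].
nra.
Qed.

Lemma connect_pred_closed (T : finType) (e : rel T) (A : {set T}) a :
  (forall i j, connect e i j) -> a \in A ->
  (forall x y, e x y -> y \in A -> x \in A) -> A = setT.
Proof.
move=> conn aA closed; apply/setP => x; rewrite inE.
case/connectP: (conn x a) => p; elim: p x => [|y p IH] x /=; first by move=> _ <-.
by case/andP=> exy py last_a; apply: (closed x y exy); exact: IH.
Qed.

Section Averaging.
Variables (R : numDomainType) (n : nat) (w : nat -> 'I_n -> 'I_n -> R).
Hypothesis w_ge0 : forall t i j, 0 <= w t i j.
Hypothesis w_col : forall t j, \sum_i w t i j = 1.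

Definition backward_avg (z : nat -> 'I_n -> R) (T : nat) : Prop :=
  forall s j, (s < T)%N -> z s j = \sum_i w s i j * z s.+1 i.

Definition forward (y : nat -> 'I_n -> R) : Prop :=
  forall s i, y s.+1 i = \sum_j w s i j * y s j.

Lemma avg_le (z : nat -> 'I_n -> R) s j M :
  z s j = \sum_i w s i j * z s.+1 i -> (forall k, z s.+1 k <= M) -> z s j <= M.
Proof.
move=> -> z_le; rewrite -[M]mul1r -(w_col s j) mulr_suml.
by apply: ler_sum => k _; apply: ler_wpM2l.
Qed.

(* The backward averaging of a terminal vector v given at time T, indexed by
   the number d of steps taken back from T. *)
Fixpoint back_from (T : nat) (v : 'I_n -> R) (d : nat) : 'I_n -> R :=
  match d with
  | 0 => v
  | d'.+1 => fun j => \sum_i w (T - d'.+1)%N i j * back_from T v d' i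
  end.

Lemma back_from_avg T v : backward_avg (fun s => back_from T v (T - s)) T.
Proof.
by move=> s j lt; rewrite -(subnSK lt) /= subnSK ?subKn // ltnW.
Qed.

Lemma pairing_invariant (z y : nat -> 'I_n -> R) T :
  backward_avg z T -> forward y ->
  forall s, (s <= T)%N -> \sum_j z s j * y s j = \sum_j z T j * y T j.
Proof.
move=> avg fwd s sT; rewrite -(subKn sT); elim: (T - s)%N (leq_subr s T) => [|d IH] dT.
  by rewrite subn0.
have shift := subnSK dT.
rewrite -IH; last exact: ltnW.
rewrite (eq_bigr (fun j => \sum_i w (T - d.+1)%N i j * z (T - d)%N i * y (T - d.+1)%N j));
  last by move=> j _; rewrite avg ?shift ?mulr_suml ?leq_subr.
rewrite exchange_big /=; apply: eq_bigr => i _.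
by rewrite -shift fwd mulr_sumr; apply: eq_bigr => j _; ring.
Qed.

(* The forward recursion conserves total mass (pair with the constant 1). *)
Lemma forward_mass (y : nat -> 'I_n -> R) s T :
  forward y -> (s <= T)%N -> \sum_i y s i = \sum_i y T i.
Proof.
move=> fwd sT; have ones : backward_avg (fun _ _ => 1) T.
  by move=> t j _; under eq_bigr do rewrite mulr1; rewrite w_col.
have := pairing_invariant ones fwd sT.
by under eq_bigr do rewrite mul1r; under [in RHS]eq_bigr do rewrite mul1r.
Qed.

End Averaging.

Section Consensus.
Variables (R : archiRealFieldType) (n : nat) (E : nat -> rel 'I_n).
Variables (w : nat -> 'I_n -> 'I_n -> R) (beta : R) (L : nat).
Hypothesis w_ge0 : forall t i j, 0 <= w t i j.
Hypothesis w_col : forall t j, \sum_i w t i j = 1.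
Hypothesis w_arc : forall t i j, E t j i -> beta <= w t i j.
Hypothesis beta_gt0 : 0 < beta.
Hypothesis self_arcs : has_self_arcs E.
Hypothesis usc_L : forall t, strongly_connected (union_rel E t L).

Local Notation K := (n * L)%N.
Local Notation delta := (beta ^+ (n * L)).

(* A self-arc weight is at least beta and at most its column sum, one. *)
Lemma beta_le1 (i0 : 'I_n) : beta <= 1.
Proof.
have w_self := @w_arc 0 i0 i0 (self_arcs 0 i0).
have : w 0%N i0 i0 <= \sum_i w 0%N i i0.
  by rewrite (bigD1 i0) //= lerDl; apply: sumr_ge0 => k _.
rewrite w_col; lra.
Qed.

Lemma avg_le_arc (z : nat -> 'I_n -> R) s M h i j :
  z s j = \sum_k w s k j * z s.+1 k ->
  (forall k, z s.+1 k <= M) -> E s j i -> z s.+1 i <= M - h -> 0 <= h ->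
  z s j <= M - beta * h.
Proof.
move=> -> z_le arc zi h_ge0.
have gap : M - \sum_k w s k j * z s.+1 k = \sum_k w s k j * (M - z s.+1 k).
  by rewrite -[M in LHS]mul1r -(w_col s j) mulr_suml -sumrB;
     apply: eq_bigr => k _; rewrite mulrBr.
have gap_i : w s i j * (M - z s.+1 i) <= \sum_k w s k j * (M - z s.+1 k).
  rewrite (bigD1 i) //= lerDl; apply: sumr_ge0 => k _.
  by apply: mulr_ge0; rewrite ?subr_ge0.
have : beta * h <= w s i j * (M - z s.+1 i).
  by apply: ler_pM; [exact: ltW | done | exact: w_arc | lra].
lra.
Qed.

Section Drop.
Variables (z : nat -> 'I_n -> R) (T : nat) (M g : R) (i0 : 'I_n).
Hypothesis z_avg : backward_avg w z T.
Hypothesis z_le : forall i, z T i <= M.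
Hypothesis z_i0 : z T i0 <= M - g.
Hypothesis g_ge0 : 0 <= g.

Definition below (d : nat) : {set 'I_n} :=
  [set j | z (T - d)%N j <= M - beta ^+ d * g].

Lemma backward_le_max d i : (d <= T)%N -> z (T - d)%N i <= M.
Proof.
elim: d i => [|d IH] i d_le; first by rewrite subn0.
have shift : (T - d.+1).+1 = (T - d)%N by lia.
apply: (avg_le w_ge0 w_col); first by rewrite z_avg shift //; lia.
by move=> k; rewrite shift; apply: IH; lia.
Qed.

Lemma below_arc d j i :
  (d < T)%N -> E (T - d.+1)%N j i -> i \in below d -> j \in below d.+1.
Proof.
move=> d_lt arc; rewrite !inE => zi.
have shift : (T - d.+1).+1 = (T - d)%N by lia.
rewrite exprS -mulrA; apply: (@avg_le_arc z _ M _ i) => //.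
- by rewrite z_avg shift //; lia.
- by move=> k; rewrite shift; apply: backward_le_max; lia.
- by rewrite shift.
- by apply: mulr_ge0 => //; apply: exprn_ge0; exact: ltW.
Qed.

(* Self-arcs make [below] grow monotonically. *)
Lemma below_mono d1 d2 : (d1 <= d2 <= T)%N -> below d1 \subset below d2.
Proof.
elim: d2 => [|d2 IH] /andP[le12 le2]; first by have -> : d1 = 0%N by lia.
case: (ltngtP d1 d2.+1) => [lt12||->] //; last by lia.
apply: subset_trans (IH _) _; first by lia.
by apply/subsetP => j jA; apply: (@below_arc _ j j) => //; lia.
Qed.

Lemma below_window k a b :
  (k.+1 * L <= T)%N -> union_rel E (T - k.+1 * L) L a b ->
  b \in below (k * L) -> a \in below (k.+1 * L).
Proof.
move=> kT /existsP [l arc] b_below; have l_lt := ltn_ord l.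
rewrite mulSn in kT *.
pose d := (L + k * L - l)%N.
have b_d : b \in below d.-1.
  by apply: (subsetP (@below_mono (k * L) d.-1 _)) b_below; apply/andP; split; lia.
have time : (T - (L + k * L) + l)%N = (T - d.-1.+1)%N by rewrite /d; lia.
rewrite time in arc.
have a_d : a \in below d.-1.+1 by apply: below_arc arc b_d; rewrite /d; lia.
by apply: (subsetP (@below_mono d.-1.+1 (L + k * L) _)) a_d; apply/andP; split; rewrite /d; lia.
Qed.

Lemma below_window_grow k :
  (k.+1 * L <= T)%N -> below (k * L) != set0 ->
  below (k * L) \proper below (k.+1 * L) \/ below (k.+1 * L) = setT.
Proof.
move=> kT /set0Pn [a aA].
have sub : below (k * L) \subset below (k.+1 * L).
  by apply: below_mono; rewrite mulSn in kT *; apply/andP; split; lia.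
case: (boolP (below (k.+1 * L) \subset below (k * L))) => [back|]; last first.
  by move=> nsub; left; rewrite properE sub.
right; apply/eqP; rewrite eqEsubset subsetT /=.
rewrite -(@connect_pred_closed _ _ _ a (usc_L (T - k.+1 * L)) aA) //.
by move=> x y xy yA; apply: (subsetP back); exact: below_window xy yA.
Qed.

Lemma below_grow k :
  (k * L <= T)%N -> (k < #|below (k * L)|)%N \/ below (k * L) = setT.
Proof.
elim: k => [|k IH] kT.
  by left; apply/card_gt0P; exists i0; rewrite mul0n inE subn0 expr0 mul1r.
have kT' : (k * L <= T)%N by rewrite mulSn in kT; lia.
case: (IH kT') => [card_k | full_k].
  have ne : below (k * L) != set0 by apply/set0Pn/card_gt0P; lia.
  case: (below_window_grow kT ne) => [prop|]; last by right.
  by left; have := proper_card prop; lia.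
right; apply/eqP; rewrite eqEsubset subsetT /= -full_k.
by apply: below_mono; rewrite mulSn in kT *; apply/andP; split; lia.
Qed.

Lemma backward_drop j : (K <= T)%N -> z (T - K)%N j <= M - delta * g.
Proof.
move=> KT; case: (below_grow KT) => [big | full].
  by have := max_card (below K); rewrite card_ord; lia.
have : j \in below K by rewrite full inE.
by rewrite inE.
Qed.

End Drop.

Lemma backward_contract (z : nat -> 'I_n -> R) T B (i0 : 'I_n) :
  (K <= T)%N -> backward_avg w z T -> (forall i i', z T i - z T i' <= B) ->
  forall j j', z (T - K)%N j - z (T - K)%N j' <= (1 - delta) * B.
Proof.
move=> KT avg spread j j'.
have [imax _ max_z] := arg_maxP (z T) (isT : predT i0).
have [imin _ min_z] := arg_minP (z T) (isT : predT i0).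
set Mx := z T _ in max_z; set mn := z T _ in min_z.
have g_ge0 : 0 <= Mx - mn by rewrite subr_ge0; exact: max_z.
have at_min : z T imin <= Mx - (Mx - mn) by rewrite /mn; lra.
have up := backward_drop avg (fun i => max_z i isT) at_min g_ge0 j KT.
have avgN : backward_avg w (fun s i => - z s i) T.
  by move=> s k lt; rewrite avg // -sumrN; apply: eq_bigr => i _; rewrite mulrN.
have at_max : - z T imax <= - mn - (Mx - mn) by rewrite /Mx; lra.
have below_negmin i : - z T i <= - mn by rewrite lerN2; exact: min_z.
have low := backward_drop avgN below_negmin at_max g_ge0 j' KT.
have delta_ge0 : 0 <= delta by apply: exprn_ge0; exact: ltW.
have delta_le1 : delta <= 1 by apply: exprn_ile1; [exact: ltW | exact: beta_le1].
have : Mx - mn <= B by exact: spread.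
rewrite /= in low; nra.
Qed.

Lemma avg_spread_decay (z : nat -> 'I_n -> R) B (i0 : 'I_n) :
  (forall s j, z s j = \sum_i w s i j * z s.+1 i) ->
  (forall t j j', z (t + K)%N j - z (t + K)%N j' <= B) ->
  forall k t j j', z t j - z t j' <= (1 - delta) ^+ k.+1 * B.
Proof.
move=> avg spread_B k; have avg_T T : backward_avg w z T by move=> s j _; exact: avg.
have contract t B' : (forall i i', z (t + K)%N i - z (t + K)%N i' <= B') ->
    forall j j', z t j - z t j' <= (1 - delta) * B'.
  by move=> spread j j'; have := backward_contract i0 (leq_addl t K) (avg_T _) spread j j';
     rewrite addnK.
elim: k => [|k IH] t j j'; first by rewrite expr1; apply: contract.
by rewrite exprS -mulrA; apply: contract => i i'; exact: IH.
Qed.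

Lemma avg_consensus (z : nat -> 'I_n -> R) B (i0 : 'I_n) :
  (forall s j, z s j = \sum_i w s i j * z s.+1 i) ->
  (forall t j j', z (t + K)%N j - z (t + K)%N j' <= B) ->
  forall t j j', z t j = z t j'.
Proof.
move=> avg spread_B t.
have delta_gt0 : 0 < delta by exact: exprn_gt0.
have delta_le1 : delta <= 1 by apply: exprn_ile1; [exact: ltW | exact: beta_le1].
have nonpos j j' : z t j - z t j' <= 0.
  apply: (geometric_vanish delta_gt0 delta_le1 (B := (1 - delta) * B)) => k.
  by rewrite mulrA -exprSr; exact: avg_spread_decay.
by move=> j j'; have := nonpos j j'; have := nonpos j' j; lra.
Qed.

(* Pair y with the backward
   averaging of the indicator of the complement of i: by [backward_drop]
   that averaging is at most 1 - delta everywhere at time T - K. *)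
Lemma forward_lower_bound (y : nat -> 'I_n -> R) T i :
  forward w y -> (forall s j, 0 <= y s j) -> (K <= T)%N ->
  delta * \sum_j y T j <= y T i.
Proof.
move=> fwd y_ge0 KT.
pose v k : R := if k == i then 0 else 1.
pose z s := back_from w T v (T - s).
have zT : z T = v by rewrite /z subnn.
have v_le1 k : z T k <= 1 by rewrite zT /v; case: ifP => _; lra.
have v_i : z T i <= 1 - 1 by rewrite zT /v eqxx; lra.
have drop j : z (T - K)%N j <= 1 - delta.
  by have := backward_drop (@back_from_avg _ _ w T v) v_le1 v_i ler01 j KT; rewrite mulr1.
have pair_T : \sum_j z T j * y T j = \sum_j y T j - y T i.
  rewrite zT (bigD1 i) //= [in RHS](bigD1 i) //= /v eqxx mul0r add0r addrAC subrr add0r.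
  by apply: eq_bigr => j /negbTE ->; rewrite mul1r.
have : \sum_j z (T - K)%N j * y (T - K)%N j <= \sum_j (1 - delta) * y (T - K)%N j.
  by apply: ler_sum => j _; apply: ler_wpM2r => //; exact: drop.
rewrite -mulr_sumr (forward_mass w_col fwd (leq_subr K T)).
by rewrite (pairing_invariant (@back_from_avg _ _ w T v) fwd (leq_subr K T)) pair_T; lra.
Qed.

End Consensus.

Section PushSum.
Variables (R : realType) (n : nat) (E : nat -> rel 'I_n).
Variables (w : nat -> 'I_n -> 'I_n -> R) (beta : R) (c : 'I_n -> R).
Hypothesis weights : weight_assumptions E w beta.

Local Notation y := (pushsum E w c).

Lemma weights_ge0 t i j : 0 <= w t i j.
Proof.
case: weights => _ [w_pos [w_off _]].
by case: (boolP (j \in in_nbrs E t i)) => [/w_pos/ltW | /w_off ->].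
Qed.

Lemma weights_col_sum t j : \sum_i w t i j = 1.
Proof.
case: weights => _ [_ [w_off [_ w_out]]].
rewrite -(w_out t j) [RHS]big_mkcond /=; apply: eq_bigr => i _.
by case: ifP => // /negbT out; apply: w_off.
Qed.

Lemma weights_arc t i j : E t j i -> beta <= w t i j.
Proof. by case: weights => _ [_ [_ [w_beta _]]]; exact: w_beta. Qed.

Lemma pushsum_forward : forward w y.
Proof.
case: weights => _ [_ [w_off _]] s i; rewrite /= big_mkcond; apply: eq_bigr => j _.
by case: ifP => // /negbT out; rewrite w_off // mul0r.
Qed.

Lemma pushsum_gt0 : has_self_arcs E -> (forall i, 0 < c i) -> forall t i, 0 < y t i.
Proof.
case: weights => _ [w_pos _] self c_pos; elim=> [|t IH] i //.
rewrite pushsum_forward (bigD1 i) //=; apply: ltr_pwDl.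
  by apply: mulr_gt0 => //; apply: w_pos; exact: self.
by apply: sumr_ge0 => j _; apply: mulr_ge0; [exact: weights_ge0 | exact: ltW].
Qed.

Lemma pushsum_sum : \sum_i c i = 1 -> forall t, \sum_i y t i = 1.
Proof.
move=> c_sum t; rewrite -(forward_mass weights_col_sum pushsum_forward (leq0n t)).
exact: c_sum.
Qed.

Lemma pushsum_abs_prob : has_self_arcs E -> (forall i, 0 < c i) -> \sum_i c i = 1 ->
  abs_prob_seq (Smat E w c) y.
Proof.
move=> self c_pos c_sum; have y_gt0 := pushsum_gt0 self c_pos.
split=> [t | t j]; first by split=> [i|]; [exact: ltW | exact: pushsum_sum].
rewrite /Smat (eq_bigr (fun i => w t i j * y t j)); last first.
  by move=> i _; rewrite mulrC divfK // gt_eqF.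
by rewrite -mulr_suml weights_col_sum mul1r.
Qed.

Lemma abs_prob_ratio_avg (pi : nat -> 'I_n -> R) :
  has_self_arcs E -> (forall i, 0 < c i) -> abs_prob_seq (Smat E w c) pi ->
  forall s j, pi s j / y s j = \sum_i w s i j * (pi s.+1 i / y s.+1 i).
Proof.
move=> self c_pos [_ pi_rec] s j; have y_gt0 := pushsum_gt0 self c_pos.
rewrite pi_rec mulr_suml; apply: eq_bigr => k _; rewrite /Smat.
by field; rewrite !gt_eqF.
Qed.

(* From time K = n L on, y >= delta = beta^K, so the ratios pi / y lie in
   [0, 1 / delta]. *)
Lemma abs_prob_ratio_bounded (pi : nat -> 'I_n -> R) L :
  has_self_arcs E -> (forall i, 0 < c i) -> \sum_i c i = 1 ->
  (forall t, strongly_connected (union_rel E t L)) -> abs_prob_seq (Smat E w c) pi ->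
  forall s j, 0 <= pi (s + n * L)%N j / y (s + n * L)%N j <= (beta ^+ (n * L))^-1.
Proof.
move=> self c_pos c_sum usc [pi_stoch _] s j; set T := (s + n * L)%N.
have y_gt0 := pushsum_gt0 self c_pos.
have beta_gt0 : 0 < beta by case: weights.
have [pi_ge0 pi_sum] := pi_stoch T.
have pi_le1 : pi T j <= 1 by rewrite -pi_sum (bigD1 j) //= lerDl; apply: sumr_ge0.
have := forward_lower_bound weights_ge0 weights_col_sum weights_arc beta_gt0 self usc j
  pushsum_forward (fun s k => ltW (y_gt0 s k)) (leq_addl s _).
rewrite pushsum_sum // mulr1 => y_ge.
rewrite divr_ge0 ?(ltW (y_gt0 _ _)) //= ler_pdivrMr // mulrC ler_pdivlMr ?exprn_gt0 //.
have delta_ge0 : 0 <= beta ^+ (n * L) by rewrite exprn_ge0 // ltW.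
rewrite -/T in y_ge; have := pi_ge0 j; nra.
Qed.

Lemma equal_ratios_pushsum (pi : nat -> 'I_n -> R) t :
  has_self_arcs E -> (forall i, 0 < c i) -> \sum_i c i = 1 -> abs_prob_seq (Smat E w c) pi ->
  (forall j k, pi t j / y t j = pi t k / y t k) -> forall i, pi t i = y t i.
Proof.
move=> self c_pos c_sum [pi_stoch _] equal i; have y_gt0 := pushsum_gt0 self c_pos.
have ratio_one : pi t i / y t i = 1.
  rewrite -(pi_stoch t).2 -[LHS]mulr1 -(pushsum_sum c_sum t) mulr_sumr.
  by apply: eq_bigr => k _; rewrite (equal i k) divfK // gt_eqF.
by rewrite -[pi t i](divfK (lt0r_neq0 (y_gt0 t i))) ratio_one mul1r.
Qed.

End PushSum.

Lemma agents_gt0 (R : numDomainType) n (c : 'I_n -> R) : \sum_i c i = 1 -> (0 < n)%N.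
Proof.
case: (posnP n) => // n0; subst n.
by rewrite big_ord0 => /eqP; rewrite eq_sym oner_eq0.
Qed.

Theorem proposition5 (R : realType) (n : nat) (E : nat -> rel 'I_n)
    (w : nat -> 'I_n -> 'I_n -> R) (beta : R) (c : 'I_n -> R) :
  has_self_arcs E ->
  weight_assumptions E w beta ->
  (forall i, 0 < c i) -> \sum_i c i = 1 ->
  uniformly_strongly_connected E ->
  abs_prob_seq (Smat E w c) (pushsum E w c) /\
  (forall pi : nat -> 'I_n -> R, abs_prob_seq (Smat E w c) pi ->
     forall t i, pi t i = pushsum E w c t i).
Proof.
move=> self weights c_pos c_sum [L [_ usc]].
split; first exact: (pushsum_abs_prob weights).
move=> pi abs_pi t i.
have beta_gt0 : 0 < beta by case: weights.
have spread s j j' : pi (s + n * L)%N j / pushsum E w c (s + n * L)%N j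
    - pi (s + n * L)%N j' / pushsum E w c (s + n * L)%N j' <= (beta ^+ (n * L))^-1.
  have bound := abs_prob_ratio_bounded weights self c_pos c_sum usc abs_pi s.
  by case/andP: (bound j) => _ zj; case/andP: (bound j') => zj' _; lra.
have consensus := avg_consensus (weights_ge0 weights) (weights_col_sum weights)
  (weights_arc weights) beta_gt0 self usc (Ordinal (agents_gt0 c_sum))
  (abs_prob_ratio_avg weights self c_pos abs_pi) spread t.
exact: (equal_ratios_pushsum weights self c_pos c_sum abs_pi consensus).
Qed.
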